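(* Let $M$ be an exact $\mathfrak{K}$-module. The following are equivalent: (1) $M_0\cong\operatorname{im}\alpha_{01}\oplus\operatorname{im}\alpha_{02}$ (i.e. $M_0$ is the internal direct sum of these two subgroups); (2) $\ker\alpha_{01}=\ker N(s_1)$ and $\operatorname{im}\alpha_{10}=\operatorname{im}N(s_1)$; (3) $\ker\alpha_{02}=\ker(1-t_2)$ and $\operatorname{im}\alpha_{20}=\operatorname{im}(1-t_2)$. These equivalent conditions hold if the $\mathfrak{S}$-module $(M_1,s_1)$ is cohomologically trivial or if the $\mathfrak{S}_2$-module $(M_2,s_2,t_2)$ is cohomologically trivial.
   Context: Fix a prime $p$, $N(x)=1+x+\dots+x^{p-1}$, $\mathfrak{S}=\mathbb{Z}[t]/(t^p-1)$, $\mathfrak{S}_2=\mathbb{Z}[s,t]/((1-s)(1-t),N(s)+N(t)-p)$. A $\mathfrak{K}$-module $M$ amounts to $\mathbb{Z}/2$-graded abelian groups $M_0,M_1,M_2$ with homomorphisms $\alpha_{jk}\colon M_k\to M_j$ ($j\neq k$; $\alpha_{12},\alpha_{21}$ grading-reversing, others grading-preserving) with $\alpha_{jk}\alpha_{km}=0$ for $\{j,k,m\}=\{0,1,2\}$ and, for $t_0:=1-\alpha_{02}\alpha_{20}$ on $M_0$, $s_1:=1-\alpha_{12}\alpha_{21}$ on $M_1$, $t_2:=1-\alpha_{20}\alpha_{02}$, $s_2:=1-\alpha_{21}\alpha_{12}$ on $M_2$: $\alpha_{01}\alpha_{10}=N(t_0)$, $\alpha_{10}\alpha_{01}=N(s_1)$,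 $N(t_2)+N(s_2)=p$ (so $(M_2,s_2,t_2)$ is an $\mathfrak{S}_2$-module). $M$ is exact if the cyclic sequences $M_0\xrightarrow{\alpha_{10}}M_1\xrightarrow{\alpha_{21}}M_2\xrightarrow{\alpha_{02}}M_0$ and $M_0\xrightarrow{\alpha_{20}}M_2\xrightarrow{\alpha_{12}}M_1\xrightarrow{\alpha_{01}}M_0$ are exact. An $\mathfrak{S}$-module $(L,t)$ is cohomologically trivial if $\ker(1-t)=\operatorname{im}N(t)$ and $\operatorname{im}(1-t)=\ker N(t)$; an $\mathfrak{S}_2$-module $(L,s,t)$ is cohomologically trivial if $\operatorname{im}(1-t)=\ker(1-s)$ and $\operatorname{im}(1-s)=\ker(1-t)$. *)

From HB Require Import structures.
From mathcomp Require Import all_boot all_order all_algebra.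
Set Implicit Arguments. Unset Strict Implicit. Unset Printing Implicit Defensive.
Import GRing.Theory.
Local Open Scope ring_scope.

Definition Nop (p : nat) (M : zmodType) (f : M -> M) (x : M) : M :=
  \sum_(i < p) iter i f x.

Definition one_minus (M : zmodType) (f : M -> M) (x : M) : M := x - f x.

Definition kerP (U V : zmodType) (f : U -> V) : U -> Prop := fun x => f x = 0.
Definition imP (U V : zmodType) (f : U -> V) : V -> Prop :=
  fun y => exists x, f x = y.

Definition same_set (T : Type) (A B : T -> Prop) : Prop := forall x, A x <-> B x.

Definition internal_dsum (M : zmodType) (A B : M -> Prop) : Prop :=
  (forall x, exists y z, A y /\ B z /\ x = y + z) /\
  (forall x, A x -> B x -> x = 0).

Definition exact_at (U V W : zmodType) (f : U -> V) (g : V -> W) : Prop :=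
  same_set (kerP g) (imP f).

(* A Z/2-grading of an abelian group M is encoded by the additive idempotent
   projection e onto the even part M^0 (with kernel the odd part M^1). *)
Definition grading (M : zmodType) (e : M -> M) : Prop := forall x, e (e x) = e x.
Definition grading_preserving (U V : zmodType) (eU : U -> U) (eV : V -> V)
  (f : U -> V) : Prop := forall x, f (eU x) = eV (f x).
Definition grading_reversing (U V : zmodType) (eU : U -> U) (eV : V -> V)
  (f : U -> V) : Prop := forall x, f (eU x) = f x - eV (f x).

Record KModule (p : nat) := {
  KM0 : zmodType; KM1 : zmodType; KM2 : zmodType;
  gr0 : {additive KM0 -> KM0}; gr1 : {additive KM1 -> KM1};
  gr2 : {additive KM2 -> KM2};
  gr0_idem : grading gr0; gr1_idem : grading gr1; gr2_idem : grading gr2;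
  a01 : {additive KM1 -> KM0}; a10 : {additive KM0 -> KM1};
  a02 : {additive KM2 -> KM0}; a20 : {additive KM0 -> KM2};
  a12 : {additive KM2 -> KM1}; a21 : {additive KM1 -> KM2};
  a01_gr : grading_preserving gr1 gr0 a01;
  a10_gr : grading_preserving gr0 gr1 a10;
  a02_gr : grading_preserving gr2 gr0 a02;
  a20_gr : grading_preserving gr0 gr2 a20;
  a12_gr : grading_reversing gr2 gr1 a12;
  a21_gr : grading_reversing gr1 gr2 a21;
  a01a12 : forall x, a01 (a12 x) = 0;
  a02a21 : forall x, a02 (a21 x) = 0;
  a10a02 : forall x, a10 (a02 x) = 0;
  a12a20 : forall x, a12 (a20 x) = 0;
  a20a01 : forall x, a20 (a01 x) = 0;
  a21a10 : forall x, a21 (a10 x) = 0;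
  a01a10 : forall x, a01 (a10 x) = Nop p (fun y => y - a02 (a20 y)) x;
  a10a01 : forall x, a10 (a01 x) = Nop p (fun y => y - a12 (a21 y)) x;
  N2rel : forall x, Nop p (fun y => y - a20 (a02 y)) x
                    + Nop p (fun y => y - a21 (a12 y)) x = x *+ p
}.

Section Ops.
Variables (p : nat) (M : KModule p).
Definition t0 : KM0 M -> KM0 M := fun y => y - a02 M (a20 M y).
Definition s1 : KM1 M -> KM1 M := fun y => y - a12 M (a21 M y).
Definition t2 : KM2 M -> KM2 M := fun y => y - a20 M (a02 M y).
Definition s2 : KM2 M -> KM2 M := fun y => y - a21 M (a12 M y).

Definition Kexact : Prop :=
  (exact_at (a10 M) (a21 M) /\ exact_at (a21 M) (a02 M) /\
   exact_at (a02 M) (a10 M)) /\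
  (exact_at (a20 M) (a12 M) /\ exact_at (a12 M) (a01 M) /\
   exact_at (a01 M) (a20 M)).
End Ops.
Arguments t0 {p} M _.
Arguments s1 {p} M _.
Arguments t2 {p} M _.
Arguments s2 {p} M _.
Arguments Kexact {p} M.

Definition coh_trivial_S (p : nat) (L : zmodType) (t : L -> L) : Prop :=
  same_set (kerP (one_minus t)) (imP (Nop p t)) /\
  same_set (imP (one_minus t)) (kerP (Nop p t)).

Definition coh_trivial_S2 (L : zmodType) (s t : L -> L) : Prop :=
  same_set (imP (one_minus t)) (kerP (one_minus s)) /\
  same_set (imP (one_minus s)) (kerP (one_minus t)).

(* For composable additive maps f : A -> B and g : B -> C, ker f = ker (g f)
   iff im f meets ker g trivially, and im g = im (g f) iff im f + ker g = B;
   together they say B = im f (+) ker g.  In an exact K-module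
   N(s_1) = alpha_10 alpha_01 and 1 - t_2 = alpha_20 alpha_02, while exactness
   identifies ker alpha_10 with im alpha_02 and ker alpha_20 with im alpha_01,
   so (2) and (3) both say M_0 = im alpha_01 (+) im alpha_02.
   If (M_1, s_1) is cohomologically trivial, ker N(s_1) = im (alpha_12 alpha_21)
   is killed by alpha_01, and im alpha_10 is killed by alpha_21, hence lies in
   ker (1 - s_1) = im N(s_1): this is (2).  The S_2 case gives (3) in the same
   way, with 1 - s_2 = alpha_21 alpha_12. *)
From mathcomp Require Import all_boot all_order all_algebra.
From Stdlib Require Import FunctionalExtensionality.
Set Implicit Arguments.
Unset Strict Implicit.
Unset Printing Implicit Defensive.
Import GRing.Theory.
Local Open Scope ring_scope.

Lemma same_set_sym (T : Type) (A B : T -> Prop) :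
  same_set A B -> same_set B A.
Proof. by move=> AB x; apply: iff_sym. Qed.

Lemma internal_dsum_sym (M : zmodType) (A B : M -> Prop) :
  internal_dsum A B -> internal_dsum B A.
Proof.
move=> [sumAB capAB]; split=> [x | x Bx Ax]; last exact: capAB.
by have [y [z [Ay [Bz ->]]]] := sumAB x; exists z, y; rewrite addrC.
Qed.

Lemma internal_dsum_same_setr (M : zmodType) (A B B' : M -> Prop) :
  same_set B B' -> internal_dsum A B -> internal_dsum A B'.
Proof.
move=> BB' [sumAB capAB]; split=> [x | x Ax B'x]; last exact/capAB/BB'.
by have [y [z [Ay [/BB' B'z ->]]]] := sumAB x; exists y, z.
Qed.

Definition comp_ker_im_stable (A B C : zmodType) (f : A -> B) (g : B -> C) :
  Prop :=
  same_set (kerP f) (kerP (g \o f)) /\ same_set (imP g) (imP (g \o f)).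

Section Composition.
Variables (A B C : zmodType) (f : {additive A -> B}) (g : {additive B -> C}).

Lemma same_ker_compP :
  same_set (kerP f) (kerP (g \o f)) <->
  (forall y, imP f y -> kerP g y -> y = 0).
Proof.
split=> [kerE _ [x <-] gfx0 | capfg x]; first exact/(kerE x).2.
split=> [fx0 | gfx0]; first by rewrite /kerP /= fx0 raddf0.
by apply: capfg; first exists x.
Qed.

Lemma same_im_compP :
  same_set (imP g) (imP (g \o f)) <->
  (forall y, exists u v, imP f u /\ kerP g v /\ y = u + v).
Proof.
split=> [imE y | sumfg z].
  have [x gfx] := (imE (g y)).1 (ex_intro _ y erefl).
  exists (f x), (y - f x); split; first by exists x.
  by rewrite /kerP raddfB -gfx subrr addrC subrK.
split=> [[y <-] | [x <-]]; last by exists (f x).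
have [_ [v [[x <-] [gv0 ->]]]] := sumfg y.
by exists x; rewrite /= raddfD gv0 addr0.
Qed.

Lemma internal_dsum_im_kerP :
  internal_dsum (imP f) (kerP g) <-> comp_ker_im_stable f g.
Proof.
have kerE := same_ker_compP; have imE := same_im_compP.
by split=> [[/imE.2 sumfg /kerE.2 capfg] | [/kerE.1 capfg /imE.1 sumfg]].
Qed.

End Composition.

Section CohomologicallyTrivial.
Variables (A B E : zmodType) (f : {additive A -> B}) (g : {additive B -> A}).
Variables (h : {additive E -> A}) (k : {additive A -> E}).
Hypotheses (fh0 : forall x, f (h x) = 0) (kg0 : forall x, k (g x) = 0).

Lemma comp_ker_im_stable_of_ker_sub_im :
  (forall x, kerP (h \o k) x -> imP (g \o f) x) ->
  (forall x, kerP (g \o f) x -> imP (h \o k) x) ->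
  comp_ker_im_stable f g.
Proof.
move=> kerhk_sub kergf_sub; split=> x; split.
- by rewrite /kerP /= => ->; rewrite raddf0.
- by move/kergf_sub => [y <-]; apply: fh0.
- by move=> [y <-]; apply: kerhk_sub; rewrite /kerP /= kg0 raddf0.
- by move=> [y <-]; exists (f y).
Qed.

End CohomologicallyTrivial.

Lemma one_minus_subK (V : zmodType) (e : V -> V) :
  one_minus (fun y => y - e y) = e.
Proof.
by apply: functional_extensionality => x; rewrite /one_minus opprB addrC subrK.
Qed.

Section KModuleComposites.
Variables (p : nat) (M : KModule p).

Lemma Nop_s1E : Nop p (s1 M) = a10 M \o a01 M.
Proof. by apply: functional_extensionality => x; rewrite /= a10a01. Qed.

Lemma one_minus_s1E : one_minus (s1 M) = a12 M \o a21 M.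
Proof. exact: one_minus_subK. Qed.

Lemma one_minus_t2E : one_minus (t2 M) = a20 M \o a02 M.
Proof. exact: one_minus_subK. Qed.

Lemma one_minus_s2E : one_minus (s2 M) = a21 M \o a12 M.
Proof. exact: one_minus_subK. Qed.

End KModuleComposites.

Theorem lemma7p9 (p : nat) (hp : prime p) (M : KModule p) (hex : Kexact M) :
  let cond1 := internal_dsum (imP (a01 M)) (imP (a02 M)) in
  let cond2 := same_set (kerP (a01 M)) (kerP (Nop p (s1 M))) /\
               same_set (imP (a10 M)) (imP (Nop p (s1 M))) in
  let cond3 := same_set (kerP (a02 M)) (kerP (one_minus (t2 M))) /\
               same_set (imP (a20 M)) (imP (one_minus (t2 M))) in
  [/\ cond1 <-> cond2, cond2 <-> cond3 &
      (coh_trivial_S p (s1 M) \/ coh_trivial_S2 (s2 M) (t2 M) -> cond1)].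
Proof.
move=> cond1 cond2 cond3.
have ker10E : same_set (kerP (a10 M)) (imP (a02 M)) := hex.1.2.2.
have ker20E : same_set (kerP (a20 M)) (imP (a01 M)) := hex.2.2.2.
have cond12 : cond1 <-> cond2.
  rewrite /cond2 Nop_s1E; split=> [c1 | /internal_dsum_im_kerP c2].
    apply/internal_dsum_im_kerP.
    exact: internal_dsum_same_setr (same_set_sym ker10E) c1.
  exact: internal_dsum_same_setr ker10E c2.
have cond13 : cond1 <-> cond3.
  rewrite /cond3 one_minus_t2E.
  split=> [/internal_dsum_sym c1 | /internal_dsum_im_kerP c3].
    apply/internal_dsum_im_kerP.
    exact: internal_dsum_same_setr (same_set_sym ker20E) c1.
  apply/internal_dsum_sym; exact: internal_dsum_same_setr ker20E c3.
split; [exact: cond12 | by split=> [/cond12/cond13 | /cond13/cond12] | case].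
- rewrite /coh_trivial_S Nop_s1E one_minus_s1E => -[ker_s1 ker_N].
  apply/cond12; rewrite /cond2 Nop_s1E.
  apply: (comp_ker_im_stable_of_ker_sub_im (@a01a12 _ M) (@a21a10 _ M)) => x.
    exact: (ker_s1 x).1.
  exact: (ker_N x).2.
- rewrite /coh_trivial_S2 one_minus_s2E one_minus_t2E => -[im_t2 im_s2].
  apply/cond13; rewrite /cond3 one_minus_t2E.
  apply: (comp_ker_im_stable_of_ker_sub_im (@a02a21 _ M) (@a12a20 _ M)) => x.
    exact: (im_t2 x).2.
  exact: (im_s2 x).2.
Qed.
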